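(* Let $G$ be a graph (possibly infinite) and $M$ a matching in $G$. Then $M$ has maximal support (i.e. there is no matching $N$ in $G$ with $supp(N)\supsetneq supp(M)$) if and only if there exists no finitely improving and no infinitely improving $M$-alternating path in $G$.
   Context: The support $supp(M)$ of a matching $M$ is the set of vertices incident with an edge of $M$. A path is $M$-alternating if of any two consecutive edges on it exactly one lies in $M$. An $M$-alternating path is finitely improving if it is finite, has at least one edge, and both its endpoints lie outside $supp(M)$. It is infinitely improving if it is a one-way infinite path (a ray, with exactly one endpoint) whose endpoint does not belong to $supp(M)$. *)

(* graphs may be infinite, so vertices form an arbitrary Type.
   A (simple, undirected) graph is a symmetric irreflexive relation [adj].
   A set of edges (e.g. a matching) is a symmetric relation [m] on vertices,
   where [m x y] means that the edge xy belongs to the set. *)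

Section Matchings.
Variable V : Type.
Variable adj : V -> V -> Prop.

Definition is_matching (m : V -> V -> Prop) : Prop :=
  (forall x y, m x y -> m y x) /\
  (forall x y, m x y -> adj x y) /\
  (forall x y z, m x y -> m x z -> y = z).

Definition supp (m : V -> V -> Prop) (v : V) : Prop := exists w, m v w.

Definition max_support (m : V -> V -> Prop) : Prop :=
  ~ exists n : V -> V -> Prop,
      is_matching n /\
      (forall v, supp m v -> supp n v) /\
      (exists v, supp n v /\ ~ supp m v).

Definition alt_at (m : V -> V -> Prop) (f : nat -> V) (i : nat) : Prop :=
  m (f i) (f (S i)) <-> ~ m (f (S i)) (f (S (S i))).

Definition fin_improving (m : V -> V -> Prop) (n : nat) (f : nat -> V) : Prop :=
  1 <= n /\
  (forall i j, i <= n -> j <= n -> f i = f j -> i = j) /\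
  (forall i, i < n -> adj (f i) (f (S i))) /\
  (forall i, S i < n -> alt_at m f i) /\
  ~ supp m (f 0) /\ ~ supp m (f n).

Definition inf_improving (m : V -> V -> Prop) (f : nat -> V) : Prop :=
  (forall i j, f i = f j -> i = j) /\
  (forall i, adj (f i) (f (S i))) /\
  (forall i, alt_at m f i) /\
  ~ supp m (f 0).

End Matchings.

From Stdlib Require Import Classical ClassicalEpsilon Lia PeanoNat Wf_nat.

(* If P is an M-alternating path whose first vertex (and last vertex, if P is
   finite) lies outside supp(M), then M Δ E(P) is a matching covering supp(M)
   together with the first vertex of P.
   Conversely, let N be a matching with supp(N) ⊋ supp(M) and v ∈ supp(N) \ supp(M).
   From v follow alternately the N-edge and the M-edge at the current vertex.
   A vertex reached by an M-edge lies in supp(M) ⊆ supp(N), so the walk can only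
   stop at a vertex outside supp(M) reached by an N-edge.  As M and N are matchings
   and v is M-free, the walk never revisits a vertex, so it is a finitely or an
   infinitely improving path. *)

Section Matchings.

Variables (V : Type) (adj : V -> V -> Prop).

Section MatchingFacts.

Variable m : V -> V -> Prop.
Hypothesis Hm : is_matching V adj m.

Lemma matching_sym x y : m x y -> m y x.
Proof. exact (proj1 Hm x y). Qed.

Lemma matching_adj x y : m x y -> adj x y.
Proof. exact (proj1 (proj2 Hm) x y). Qed.

Lemma matching_func x y z : m x y -> m x z -> y = z.
Proof. exact (proj2 (proj2 Hm) x y z). Qed.

Lemma matching_inj x y z : m x z -> m y z -> x = y.
Proof.
  intros Hx Hy. exact (matching_func z x y (matching_sym _ _ Hx) (matching_sym _ _ Hy)).
Qed.

End MatchingFacts.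

Lemma partner_function (r : V -> V -> Prop) :
  exists p : V -> V, forall x, supp V r x -> r x (p x).
Proof.
  exists (fun x => epsilon (inhabits x) (r x)).
  intros x. exact (epsilon_spec _ (r x)).
Qed.

Section AlternatingPaths.

(* A finite or infinite path is indexed by a downward closed set [dom] of naturals:
   [fun i => i <= n] for a path with n edges, [fun _ => True] for a ray. *)
Variables (m : V -> V -> Prop) (f : nat -> V) (dom : nat -> Prop).
Hypothesis dom_down : forall i, dom (S i) -> dom i.

Lemma dom_le i j : i <= j -> dom j -> dom i.
Proof. induction 1; auto. Qed.

Lemma edge_parity_alternating :
  (forall i, dom (S i) -> (m (f i) (f (S i)) <-> Nat.odd i = true)) ->
  forall i, dom (S (S i)) -> alt_at V m f i.
Proof.
  intros Hpar i Hi. unfold alt_at.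
  rewrite (Hpar i (dom_down _ Hi)), (Hpar (S i) Hi), Nat.odd_succ, <- Nat.negb_odd.
  destruct (Nat.odd i); intuition discriminate.
Qed.

Hypothesis start_free : ~ supp V m (f 0).

Lemma alternating_edge_parity :
  (forall i, dom (S (S i)) -> alt_at V m f i) ->
  forall i, dom (S i) -> (m (f i) (f (S i)) <-> Nat.odd i = true).
Proof.
  intros Halt i. induction i as [|i IH]; intros Hi.
  - split; [|discriminate]. intros e. exfalso. apply start_free. now exists (f 1).
  - specialize (IH (dom_down _ Hi)). specialize (Halt i Hi). unfold alt_at in Halt.
    rewrite Nat.odd_succ, <- Nat.negb_odd.
    destruct (Nat.odd i); simpl.
    + intuition discriminate.
    + destruct (classic (m (f (S i)) (f (S (S i))))); intuition discriminate.
Qed.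

Section Augmentation.

Hypothesis Hm : is_matching V adj m.
Hypothesis adj_sym : forall x y, adj x y -> adj y x.
Hypothesis dom_1 : dom 1.
Hypothesis path_inj : forall i j, dom i -> dom j -> f i = f j -> i = j.
Hypothesis path_adj : forall i, dom (S i) -> adj (f i) (f (S i)).
Hypothesis path_alt : forall i, dom (S (S i)) -> alt_at V m f i.
Hypothesis end_free : forall i, dom i -> ~ dom (S i) -> ~ supp V m (f i).

(* A nonempty even prefix cannot end the path: its last vertex is matched backwards. *)
Lemma dom_even_succ k : dom (2 * k) -> dom (S (2 * k)).
Proof.
  intros Hk. apply NNPP. intros Hend. apply (end_free _ Hk Hend).
  destruct k as [|k]; [contradiction|].
  replace (2 * S k) with (S (S (2 * k))) in * by lia.
  exists (f (S (2 * k))). apply (matching_sym _ Hm).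
  apply (alternating_edge_parity path_alt _ Hk).
  now rewrite Nat.odd_succ, Nat.even_mul.
Qed.

Definition on_path (x : V) : Prop := exists i, dom i /\ x = f i.

Lemma on_path_m_closed x y : m x y -> on_path y -> on_path x.
Proof.
  intros Hxy [j [Hj ->]].
  destruct j as [|j].
  { exfalso. apply start_free. exists x. exact (matching_sym _ Hm _ _ Hxy). }
  destruct (Nat.odd j) eqn:Hodd.
  - exists j. split; [exact (dom_down _ Hj)|].
    apply (matching_inj _ Hm _ _ _ Hxy).
    now apply (alternating_edge_parity path_alt).
  - destruct (classic (dom (S (S j)))) as [Hnext|Hend];
      [|exfalso; apply (end_free _ Hj Hend); exists x; exact (matching_sym _ Hm _ _ Hxy)].
    exists (S (S j)). split; [exact Hnext|].
    apply (matching_func _ Hm (f (S j))); [exact (matching_sym _ Hm _ _ Hxy)|].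
    apply (alternating_edge_parity path_alt _ Hnext).
    now rewrite Nat.odd_succ, <- Nat.negb_odd, Hodd.
Qed.

(* M Δ E(P): by [on_path_m_closed], the [m]-edges meeting the path are its odd edges. *)
Definition augment (x y : V) : Prop :=
  (~ on_path x /\ m x y) \/
  exists k, dom (S (2 * k)) /\
    ((x = f (2 * k) /\ y = f (S (2 * k))) \/ (x = f (S (2 * k)) /\ y = f (2 * k))).

Lemma augment_is_matching : is_matching V adj augment.
Proof.
  split; [|split].
  - intros x y [[Hx Hxy]|[k [Hk [[-> ->]|[-> ->]]]]].
    + left. split; [|exact (matching_sym _ Hm _ _ Hxy)].
      intros Hy. apply Hx. exact (on_path_m_closed _ _ Hxy Hy).
    + right. exists k. auto.
    + right. exists k. auto.
  - intros x y [[_ Hxy]|[k [Hk [[-> ->]|[-> ->]]]]].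
    + exact (matching_adj _ Hm _ _ Hxy).
    + exact (path_adj _ Hk).
    + exact (adj_sym _ _ (path_adj _ Hk)).
  - intros x y z [[Hx Hxy]|[k [Hk Hx]]] [[Hx' Hxz]|[k' [Hk' Hx']]].
    + exact (matching_func _ Hm _ _ _ Hxy Hxz).
    + exfalso. apply Hx. destruct Hx' as [[-> _]|[-> _]];
        [exists (2 * k') | exists (S (2 * k'))]; auto.
    + exfalso. apply Hx'. destruct Hx as [[-> _]|[-> _]];
        [exists (2 * k) | exists (S (2 * k))]; auto.
    + destruct Hx as [[-> ->]|[-> ->]]; destruct Hx' as [[e ->]|[e ->]];
        apply path_inj in e; auto; try lia;
        replace k' with k by lia; reflexivity.
Qed.

Lemma augment_covers_path x : on_path x -> supp V augment x.
Proof.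
  intros [i [Hi ->]]. destruct (Nat.Even_or_Odd i) as [[k ->]|[k ->]].
  - exists (f (S (2 * k))). right. exists k. auto using dom_even_succ.
  - rewrite Nat.add_1_r in *. exists (f (2 * k)). right. exists k. auto.
Qed.

Lemma alternating_path_not_max_support : ~ max_support V adj m.
Proof.
  intros Hmax. apply Hmax. exists augment. split; [exact augment_is_matching|split].
  - intros x [y Hxy]. destruct (classic (on_path x)) as [Hx|Hx].
    + exact (augment_covers_path _ Hx).
    + exists y. left. auto.
  - exists (f 0). split; [|exact start_free].
    apply augment_covers_path. exists 0. auto.
Qed.

End Augmentation.

End AlternatingPaths.

Section AlternatingWalks.

Variables (m N : V -> V -> Prop).
Hypotheses (Hm : is_matching V adj m) (HN : is_matching V adj N).
Hypothesis adj_irr : forall x, ~ adj x x.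

Definition walk_matching (i : nat) : V -> V -> Prop := if Nat.even i then N else m.

Lemma walk_matching_is_matching i : is_matching V adj (walk_matching i).
Proof. unfold walk_matching. now destruct (Nat.even i). Qed.

Lemma walk_matching_parity i j :
  Nat.even i = Nat.even j -> walk_matching i = walk_matching j.
Proof. unfold walk_matching. now intros ->. Qed.

Lemma even_succ_neq i j : Nat.even (S i) <> Nat.even j -> Nat.even i = Nat.even j.
Proof.
  rewrite Nat.even_succ, <- Nat.negb_even.
  destruct (Nat.even i), (Nat.even j); simpl; congruence.
Qed.

Variables (f : nat -> V) (dom : nat -> Prop).
Hypothesis dom_down : forall i, dom (S i) -> dom i.
Hypothesis walk_edge : forall i, dom (S i) -> walk_matching i (f i) (f (S i)).
Hypothesis start_free : ~ supp V m (f 0).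

(* If [f i = f j] with [i < j], the edge entering [f j] shares its matching with
   an edge at [f i], so uniqueness of partners yields an earlier repetition. *)
Lemma walk_no_return j : forall i, i < j -> dom j -> f i <> f j.
Proof.
  induction j as [j IH] using (well_founded_induction lt_wf).
  intros i Hij Hj Heq. destruct j as [|j]; [lia|].
  pose proof (walk_edge j Hj) as Ej.
  destruct (Bool.bool_dec (Nat.even i) (Nat.even j)) as [Hpar|Hpar].
  - pose proof (walk_edge i (dom_le _ dom_down _ _ Hij Hj)) as Ei.
    rewrite (walk_matching_parity _ _ Hpar) in Ei.
    assert (Hsucc : f (S i) = f j).
    { apply (matching_func _ (walk_matching_is_matching j) (f i)); [exact Ei|].
      rewrite Heq. exact (matching_sym _ (walk_matching_is_matching j) _ _ Ej). }
    destruct (Nat.lt_trichotomy (S i) j) as [Hlt|[Hsj|Hgt]].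
    + exact (IH j (Nat.lt_succ_diag_r j) (S i) Hlt (dom_down _ Hj) Hsucc).
    + subst j. rewrite Nat.even_succ, <- Nat.negb_even in Hpar.
      destruct (Nat.even i); discriminate.
    + replace j with i in * by lia. apply (adj_irr (f i)).
      apply (matching_adj _ (walk_matching_is_matching i)). congruence.
  - destruct i as [|i].
    + apply start_free. exists (f j). rewrite Heq.
      apply (matching_sym _ Hm). unfold walk_matching in Ej.
      destruct (Nat.even j); [contradiction|exact Ej].
    + pose proof (walk_edge i (dom_down _ (dom_le _ dom_down _ _ Hij Hj))) as Ei.
      rewrite (walk_matching_parity _ _ (even_succ_neq _ _ Hpar)) in Ei.
      apply (IH j (Nat.lt_succ_diag_r j) i ltac:(lia) (dom_down _ Hj)).
      apply (matching_inj _ (walk_matching_is_matching j) _ _ (f (S i)) Ei).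
      now rewrite Heq.
Qed.

Lemma walk_injective i j : dom i -> dom j -> f i = f j -> i = j.
Proof.
  intros Hi Hj Heq. destruct (Nat.lt_trichotomy i j) as [Hlt|[Hij|Hgt]]; [|exact Hij|].
  - exfalso. exact (walk_no_return j i Hlt Hj Heq).
  - exfalso. exact (walk_no_return i j Hgt Hi (eq_sym Heq)).
Qed.

Lemma walk_edge_parity i : dom (S i) -> (m (f i) (f (S i)) <-> Nat.odd i = true).
Proof.
  intros Hi. pose proof (walk_edge i Hi) as Ei. unfold walk_matching in Ei.
  rewrite <- Nat.negb_even. destruct (Nat.even i) eqn:Heven; simpl; [|tauto].
  split; [intros Hm_i; exfalso|discriminate].
  destruct i as [|i]; [apply start_free; now exists (f 1)|].
  pose proof (walk_edge i (dom_down _ Hi)) as Ei'. unfold walk_matching in Ei'.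
  rewrite Nat.even_succ, <- Nat.negb_even in Heven.
  destruct (Nat.even i); [discriminate|].
  assert (Hrep : f i = f (S (S i))).
  { apply (matching_func _ Hm (f (S i))); [exact (matching_sym _ Hm _ _ Ei')|exact Hm_i]. }
  apply walk_injective in Hrep; [lia| |exact Hi].
  exact (dom_down _ (dom_down _ Hi)).
Qed.

End AlternatingWalks.

Section LargerSupport.

Variables (m N : V -> V -> Prop).
Hypotheses (Hm : is_matching V adj m) (HN : is_matching V adj N).
Hypothesis adj_irr : forall x, ~ adj x x.
Hypothesis supp_incl : forall x, supp V m x -> supp V N x.
Variable v : V.
Hypotheses (v_covered : supp V N v) (v_free : ~ supp V m v).
Variables (pN pM : V -> V).
Hypotheses (pN_spec : forall x, supp V N x -> N x (pN x))
           (pM_spec : forall x, supp V m x -> m x (pM x)).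

Fixpoint walk (i : nat) : V :=
  match i with
  | 0 => v
  | S i => (if Nat.even i then pN else pM) (walk i)
  end.

(* The walk is meaningful as long as every vertex reached by an [N]-edge has an
   [m]-partner; vertices reached by [m]-edges always have an [N]-partner because
   [supp m] is contained in [supp N]. *)
Definition walk_dom (i : nat) : Prop :=
  forall j, j < i -> Nat.odd j = true -> supp V m (walk j).

Lemma walk_dom_down i : walk_dom (S i) -> walk_dom i.
Proof. intros Hi j Hj. apply Hi. lia. Qed.

Lemma walk_follows_matchings i :
  walk_dom (S i) -> walk_matching m N i (walk i) (walk (S i)).
Proof.
  intros Hi. unfold walk_matching. simpl. destruct (Nat.even i) eqn:Heven.
  - apply pN_spec. destruct i as [|i]; [exact v_covered|].
    apply supp_incl. rewrite Nat.even_succ in Heven.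
    exists (walk i). apply (matching_sym _ Hm). simpl.
    rewrite <- Nat.negb_odd, Heven. apply pM_spec, Hi; [lia|exact Heven].
  - apply pM_spec, Hi; [lia|]. now rewrite <- Nat.negb_even, Heven.
Qed.

Lemma walk_path_inj i j : walk_dom i -> walk_dom j -> walk i = walk j -> i = j.
Proof.
  exact (walk_injective m N Hm HN adj_irr walk walk_dom walk_dom_down
           walk_follows_matchings v_free i j).
Qed.

Lemma walk_path_adj i : walk_dom (S i) -> adj (walk i) (walk (S i)).
Proof.
  intros Hi. apply (matching_adj _ (walk_matching_is_matching m N Hm HN i)).
  exact (walk_follows_matchings i Hi).
Qed.

Lemma walk_path_alt i : walk_dom (S (S i)) -> alt_at V m walk i.
Proof.
  apply (edge_parity_alternating m walk walk_dom walk_dom_down).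
  exact (walk_edge_parity m N Hm HN adj_irr walk walk_dom walk_dom_down
           walk_follows_matchings v_free).
Qed.

Lemma walk_stops : ~ (forall i, walk_dom i) ->
  exists n, Nat.odd n = true /\ ~ supp V m (walk n) /\ walk_dom n.
Proof.
  intros Hnot.
  set (stop := fun n => Nat.odd n = true /\ ~ supp V m (walk n)).
  assert (Hstop : exists n, stop n).
  { apply NNPP. intros Hno. apply Hnot. intros i j _ Hodd.
    apply NNPP. intros Hfree. apply Hno. now exists j. }
  destruct (dec_inh_nat_subset_has_unique_least_element stop (fun n => classic _) Hstop)
    as [n [[Hn Hleast] _]].
  exists n. split; [apply Hn|split; [apply Hn|]].
  intros j Hj Hodd. apply NNPP. intros Hfree.
  specialize (Hleast j (conj Hodd Hfree)). lia.
Qed.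

Lemma walk_improving :
  (exists n f, fin_improving V adj m n f) \/ (exists f, inf_improving V adj m f).
Proof.
  destruct (classic (forall i, walk_dom i)) as [Hall|Hnot].
  - right. exists walk.
    split; [|split; [|split]]; auto using walk_path_inj, walk_path_adj, walk_path_alt.
  - left. destruct (walk_stops Hnot) as [n [Hodd [Hend Hn]]]. exists n, walk.
    assert (Hle : forall i, i <= n -> walk_dom i) by (intros i Hi j Hj; apply Hn; lia).
    split; [destruct n; [discriminate|lia]|].
    split; [auto using walk_path_inj|].
    split; [intros i Hi; apply walk_path_adj, Hle; lia|].
    split; [intros i Hi; apply walk_path_alt, Hle; lia|].
    auto.
Qed.

End LargerSupport.

End Matchings.

Theorem lemma3p3 (V : Type) (adj : V -> V -> Prop)
  (adj_sym : forall x y, adj x y -> adj y x)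
  (adj_irr : forall x, ~ adj x x)
  (m : V -> V -> Prop) (Hm : is_matching V adj m) :
  max_support V adj m <->
  ((~ exists (n : nat) (f : nat -> V), fin_improving V adj m n f) /\
   (~ exists f : nat -> V, inf_improving V adj m f)).
Proof.
  split.
  - intros Hmax. split.
    + intros [n [f [Hn [Hinj [Hadj [Halt [Hstart Hend]]]]]]].
      apply (alternating_path_not_max_support V adj m f (fun i => i <= n)); auto.
      * intros i Hi. lia.
      * intros i Hi Hnext. now replace i with n by lia.
    + intros [f [Hinj [Hadj [Halt Hstart]]]].
      apply (alternating_path_not_max_support V adj m f (fun _ => True)); auto.
  - intros [Hfin Hinf] [N [HN [Hincl [v [Hv Hvm]]]]].
    destruct (partner_function V N) as [pN HpN].
    destruct (partner_function V m) as [pM HpM].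
    destruct (walk_improving V adj m N Hm HN adj_irr Hincl v Hv Hvm pN pM HpN HpM)
      as [Hpath|Hray]; [apply Hfin|apply Hinf]; assumption.
Qed.
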